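(* Let $\mathcal{T}$ be an MPQ-tree of an interval graph $G=(V,E)$, and let $(x,y)\in E$ with $node(x)=node(y)=Q$ a Q-node with sections $S_1,\dots,S_k$ and child subtrees $T_1,\dots,T_k$. If either (1) $x$ and $y$ have more than one common section in $Q$ (i.e. $|\{i: x\in S_i \text{ and } y\in S_i\}|\ge 2$), or (2) for some common section $S_i$ of $x$ and $y$ the set $V_i$ does not induce a clique in $G$, then $(x,y)$ is not an interval edge.
   Context: Graphs are finite and simple; for $G=(V,E)$ and $e\in E$, $G-e=(V,E\setminus\{e\})$. An edge $(x,y)\in E$ of an interval graph $G$ is an interval edge if $G-(x,y)$ is an interval graph. An MPQ-tree of an interval graph $G=(V,E)$, $V=\{1,\dots,n\}$, is a rooted plane tree whose nodes are P-nodes and Q-nodes. Each P-node carries a (possibly empty) set of vertices. A Q-node has $k\ge 3$ ordered positions $1,\dots,k$; position $i$ carries a set $S_i\subseteq V$ (the $i$-th section) and a child subtree $T_i$, which may be empty. Every vertex $v$ is assigned to exactly one node $node(v)$: either $v$ lies in the set of the P-node $node(v)$, or $node(v)$ is a Q-node and $v$ lies exactly in the sections $S_{l(v)},\dots,S_{r(v)}$ of it, with $l(v)<r(v)$. For a node with child subtrees $T_1,\dots,T_k$, $V_i$ denotes the set of vertices assigned to nodes of $T_i$ ($V_i=\emptyset$ if $T_i$ is empty). The maximal cliques of $G$ are in bijection with the descending paths from the root which at a P-node continue into one of its children (stopping if there is none) and at a Q-node choose a position $i$ and continue into $T_i$ (stopping if $T_i$ is empty); the clique is the union of the sets of the visited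 P-nodes and the chosen sections. Reading these cliques left to right gives a linear order of the maximal cliques, and the orders obtained this way after arbitrarily permuting children of P-nodes and reversing the positions of Q-nodes are exactly the orders of the maximal cliques of $G$ in which the cliques containing any fixed vertex are consecutive. Moreover, for every Q-node with sections $S_1,\dots,S_k$: (a) $V_1\neq\emptyset$ and $V_k\ne\emptyset$; (b) $S_1\subseteq S_2$ and $S_k\subseteq S_{k-1}$; (c) $S_{i-1}\cap S_i\neq\emptyset$ for $2\le i\le k$; (d) $S_{i-1}\neq S_i$ for $2\le i\le k$; (e) $(S_i\cap S_{i+1})\setminus S_1\neq\emptyset$ and $(S_{i-1}\cap S_i)\setminus S_k\neq\emptyset$ for $2\le i\le k-1$; (f) $(S_{i-1}\cup V_{i-1})\setminus S_i\neq\emptyset$ and $(S_i\cup V_i)\setminus S_{i-1}\neq\emptyset$ for $2\le i\le k$; and further (g) no empty P-node has an empty P-node as its parent, (h) no P-node has exactly one child whose root is a P-node, (i) every child subtree of a P-node is nonempty. *)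

From HB Require Import structures.
From mathcomp Require Import all_boot all_order all_algebra.
From Stdlib Require List.
Set Implicit Arguments. Unset Strict Implicit. Unset Printing Implicit Defensive.
Import Order.TTheory GRing.Theory Num.Theory.

(* A finite simple graph on the finite vertex type T is a symmetric,
   irreflexive relation g : rel T. *)

Definition del_edge (T : finType) (g : rel T) (x y : T) : rel T :=
  fun u v => g u v && ~~ (((u == x) && (v == y)) || ((u == y) && (v == x))).

Definition interval_graph (T : finType) (g : rel T) : Prop :=
  exists (l r : T -> rat),
    (forall v, l v <= r v)%R /\
    (forall u v, u != v -> (g u v <-> (Num.max (l u) (l v) <= Num.min (r u) (r v))%R)).

Definition interval_edge (T : finType) (g : rel T) (x y : T) : Prop :=
  g x y /\ interval_graph (del_edge g x y).

Definition is_clique (T : finType) (g : rel T) (K : {set T}) : Prop :=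
  forall u v, u \in K -> v \in K -> u != v -> g u v.

Definition max_clique (T : finType) (g : rel T) (K : {set T}) : Prop :=
  is_clique g K /\ (forall K' : {set T}, K \subset K' -> is_clique g K' -> K' = K).

(* PNode Sv cs : P-node carrying the vertex set Sv with (nonempty) child
   subtrees cs (in plane order).
   QNode ss  : Q-node with positions 1..k; position i carries the section
   S_i = (nth i ss).1 and the child subtree (nth i ss).2 (None = empty). *)
Inductive mpq (T : finType) : Type :=
| PNode : {set T} -> seq (mpq T) -> mpq T
| QNode : seq ({set T} * option (mpq T)) -> mpq T.
Arguments PNode {T}.
Arguments QNode {T}.

Section MPQ.
Variable T : finType.

Fixpoint nodes (t : mpq T) : seq (mpq T) :=
  t :: match t with
       | PNode _ cs => flatten (map nodes cs)
       | QNode ss => flatten (map (fun p => match p.2 with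
                                           | Some c => nodes c
                                           | None => [::] end) ss)
       end.

Definition node_verts (t : mpq T) : {set T} :=
  match t with
  | PNode Sv _ => Sv
  | QNode ss => \bigcup_(p <- ss) p.1
  end.

Definition tree_verts (t : mpq T) : {set T} :=
  \bigcup_(nd <- nodes t) node_verts nd.
Definition otree_verts (o : option (mpq T)) : {set T} :=
  if o is Some t then tree_verts t else set0.

(* the cliques given by descending paths, read left to right *)
Fixpoint path_cliques (t : mpq T) : seq {set T} :=
  match t with
  | PNode Sv cs =>
      if cs is [::] then [:: Sv]
      else flatten (map (fun c => map (setU Sv) (path_cliques c)) cs)
  | QNode ss =>
      flatten (map (fun p => match p.2 with
                             | None => [:: p.1]
                             | Some c => map (setU p.1) (path_cliques c) end) ss)
  end.

Fixpoint choices (A : Type) (L : seq (seq A)) : seq (seq A) :=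
  if L is l :: L' then [seq a :: c | a <- l, c <- choices L'] else [:: [::]].

(* all clique orders obtained by permuting children of P-nodes and reversing
   Q-nodes, arbitrarily throughout the tree *)
Fixpoint tree_orders (t : mpq T) : seq (seq {set T}) :=
  match t with
  | PNode Sv cs =>
      if cs is [::] then [:: [:: Sv]]
      else let L := map tree_orders cs in
           [seq map (setU Sv) (flatten ch)
           | p <- permutations (iota 0 (size cs)),
             ch <- choices [seq nth [::] L i | i <- p]]
  | QNode ss =>
      let L := map (fun p => match p.2 with
                             | None => [:: [:: p.1]]
                             | Some c => map (map (setU p.1)) (tree_orders c) end) ss in
      [seq flatten ch | ch <- choices L] ++ [seq flatten (rev ch) | ch <- choices L]
  end.

End MPQ.

Section MPQTree.
Variables (T : finType) (g : rel T).

Definition clique_order (L : seq {set T}) : Prop :=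
  uniq L /\ (forall K, K \in L <-> max_clique g K).

Definition consecutive (L : seq {set T}) : Prop :=
  forall (v : T) (i j k : nat), i <= j -> j <= k -> k < size L ->
    v \in nth set0 L i -> v \in nth set0 L k -> v \in nth set0 L j.

Definition sec (ss : seq ({set T} * option (mpq T))) (i : nat) : {set T} :=
  (nth (set0, None) ss i).1.
Definition sub (ss : seq ({set T} * option (mpq T))) (i : nat) : {set T} :=
  otree_verts (nth (set0, None) ss i).2.

(* conditions on a single Q-node with positions 0..k-1 (paper: 1..k) *)
Definition Qnode_ok (ss : seq ({set T} * option (mpq T))) : Prop :=
  let k := size ss in
  3 <= k /\
      (forall v, v \in node_verts (QNode ss) ->
         exists l r, l < r < k /\ forall i, i < k -> (v \in sec ss i) = (l <= i <= r)) /\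
      (sub ss 0 != set0 /\ sub ss k.-1 != set0) /\
      (sec ss 0 \subset sec ss 1 /\ sec ss k.-1 \subset sec ss k.-2) /\
      (forall i, 0 < i < k ->
          sec ss i.-1 :&: sec ss i != set0 /\ sec ss i.-1 != sec ss i) /\
      (forall i, 0 < i < k.-1 ->
          (sec ss i :&: sec ss i.+1) :\: sec ss 0 != set0 /\
          (sec ss i.-1 :&: sec ss i) :\: sec ss k.-1 != set0) /\
      (forall i, 0 < i < k ->
          (sec ss i.-1 :|: sub ss i.-1) :\: sec ss i != set0 /\
          (sec ss i :|: sub ss i) :\: sec ss i.-1 != set0).

(* conditions (g),(h) on a single P-node; (i) holds by construction *)
Definition Pnode_ok (Sv : {set T}) (cs : seq (mpq T)) : Prop :=
  (Sv = set0 -> forall c, List.In c cs -> forall cs', c <> PNode set0 cs') /\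
  (forall S' cs', cs <> [:: PNode S' cs']).

Definition MPQ_tree (t : mpq T) : Prop :=
  [/\
      (forall v, count (fun nd => v \in node_verts nd) (nodes t) = 1),
      uniq (path_cliques t) /\ (forall K, K \in path_cliques t <-> max_clique g K),
      (forall L, L \in tree_orders t <-> clique_order L /\ consecutive L),
      (forall ss, List.In (QNode ss) (nodes t) -> Qnode_ok ss) &
      (forall Sv cs, List.In (PNode Sv cs) (nodes t) -> Pnode_ok Sv cs)].

End MPQTree.

(* If x and y share two sections of Q, or share a
   section S_i whose subtree V_i is not a clique, we exhibit two non-adjacent
   common neighbours a, b of x and y; then a - x - b - y is an induced 4-cycle of
   G - xy, which is impossible in an interval graph. *)

From HB Require Import structures.
From mathcomp Require Import all_boot all_order all_algebra.
From mathcomp Require Import zify lra.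
Import Order.TTheory.
Set Implicit Arguments. Unset Strict Implicit. Unset Printing Implicit Defensive.

Section FlattenBlocks.
Variables (A B : Type) (f : A -> seq B) (d : A).

Lemma In_flatten_nth (s : seq A) (y : B) :
  List.In y (flatten (map f s)) <-> exists2 j, j < size s & List.In y (f (nth d s j)).
Proof.
elim: s => [|a s IH] /=; first by split=> [[]|[]].
have In_cat (l1 l2 : seq B) : List.In y (l1 ++ l2) <-> List.In y l1 \/ List.In y l2.
  by elim: l1 => [|z l1 IHl] /=; [tauto | rewrite IHl; tauto].
rewrite In_cat IH; split=> [[Hy|[j Hj Hy]]|[[|j] Hj Hy]].
- by exists 0.
- by exists j.+1.
- by left.
- by right; exists j.
Qed.

Lemma count_flatten_nth (p : pred B) (s : seq A) j :
  j < size s -> count p (f (nth d s j)) <= count p (flatten (map f s)).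
Proof.
elim: s j => [|a s IH] [|j] //= Hj; rewrite count_cat ?leq_addr //.
exact: leq_trans (IH j Hj) (leq_addl _ _).
Qed.

Lemma count_flatten_le1 (p : pred B) (s : seq A) i j :
  count p (flatten (map f s)) <= 1 -> i < size s -> j < size s ->
  has p (f (nth d s i)) -> has p (f (nth d s j)) -> i = j.
Proof.
elim: s i j => [|a s IH] [|i] [|j] //=; rewrite count_cat !has_count => Hle Hi Hj.
- by move=> Ha Hs; have := leq_trans Hs (count_flatten_nth p Hj); lia.
- by move=> Hs Ha; have := leq_trans Hs (count_flatten_nth p Hi); lia.
- move=> Hsi Hsj; congr S; apply: IH Hi Hj _ _; rewrite ?has_count //; lia.
Qed.

End FlattenBlocks.

Lemma mem_flatten_nth (A : Type) (B : eqType) (f : A -> seq B) (d : A) (s : seq A) (y : B) :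
  reflect (exists2 j, j < size s & y \in f (nth d s j)) (y \in flatten (map f s)).
Proof.
apply: (iffP idP).
  elim: s => [|a s IH] //=; rewrite mem_cat => /orP[Hy|/IH[j Hj Hy]].
    by exists 0.
  by exists j.+1.
case=> j; elim: s j => [|a s IH] [|j] //= Hj Hy; rewrite mem_cat ?Hy //.
by rewrite (IH j Hj Hy) orbT.
Qed.

Lemma bigcup_nthP (A : Type) (T : finType) (F : A -> {set T}) (d : A) (s : seq A) (v : T) :
  reflect (exists2 j, j < size s & v \in F (nth d s j)) (v \in \bigcup_(a <- s) F a).
Proof.
rewrite (big_nth d) big_mkord; apply: (iffP bigcupP) => [[j _ Hv]|[j Hj Hv]].
  by exists j.
by exists (Ordinal Hj).
Qed.

Lemma in_bigcup_has (A : Type) (T : finType) (F : A -> {set T}) (s : seq A) (v : T) :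
  (v \in \bigcup_(a <- s) F a) = has (fun a => v \in F a) s.
Proof. by elim: s => [|a s IH]; rewrite ?big_nil ?in_set0 // big_cons in_setU IH. Qed.

Lemma count_gt1_nth (A : Type) (p : pred A) (s : seq A) (d : A) :
  1 < count p s -> exists i j, [/\ i < j, j < size s, p (nth d s i) & p (nth d s j)].
Proof.
elim: s => [|a s IH] //=; case Ha: (p a) => /=.
  rewrite add1n ltnS -has_count => Hh.
  by exists 0, (find p s).+1; split; rewrite //= ?ltnS -?has_find ?Ha ?nth_find.
by rewrite add0n => /IH [i [j [H1 H2 H3 H4]]]; exists i.+1, j.+1.
Qed.

Section TreeStructure.
Variable T : finType.
Implicit Types (t s c : mpq T) (p : {set T} * option (mpq T)) (K : {set T}) (v : T).

(* Uniform view of a node as a list of branches (R, o): a P-node with vertex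
   set Sv has a branch (Sv, Some c) for each child c (or one branch (Sv, None)
   if it is a leaf); a Q-node has one branch (S_i, T_i) per position. *)
Definition branches t : seq ({set T} * option (mpq T)) :=
  match t with
  | PNode Sv [::] => [:: (Sv, None)]
  | PNode Sv cs => [seq (Sv, Some c) | c <- cs]
  | QNode ss => ss
  end.

Local Notation branch t j := (nth (set0, None) (branches t) j).

Definition branch_nodes p : seq (mpq T) := if p.2 is Some c then nodes c else [::].

Definition branch_cliques p : seq {set T} :=
  if p.2 is Some c then map (setU p.1) (path_cliques c) else [:: p.1].

Lemma nodes_branches t : nodes t = t :: flatten (map branch_nodes (branches t)).
Proof. by case: t => [Sv [|c cs]|ss] //=; rewrite -map_comp. Qed.

Lemma path_cliques_branches t :
  path_cliques t = flatten (map branch_cliques (branches t)).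
Proof. by case: t => [Sv [|c cs]|ss] //=; rewrite -map_comp. Qed.

Lemma node_verts_branches t : node_verts t = \bigcup_(p <- branches t) p.1.
Proof.
case: t => [Sv [|c cs]|ss] //=; first by rewrite big_seq1.
rewrite big_cons big_map; apply/esym/setUidPl.
by elim: cs => [|c' cs IH]; rewrite ?big_nil ?sub0set // big_cons subUset subxx.
Qed.

Lemma otree_verts_has p v :
  (v \in otree_verts p.2) = has (fun nd => v \in node_verts nd) (branch_nodes p).
Proof. by case: p => [R [c|]] /=; rewrite ?in_set0 // /tree_verts in_bigcup_has. Qed.

Lemma tree_verts_branches t :
  tree_verts t = node_verts t :|: \bigcup_(p <- branches t) otree_verts p.2.
Proof.
rewrite /tree_verts nodes_branches big_cons big_flatten /= big_map.
by congr (_ :|: _); apply: eq_bigr => -[R [c|]] _ //=; rewrite big_nil.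
Qed.

Lemma branch_node_verts t j : j < size (branches t) -> (branch t j).1 \subset node_verts t.
Proof.
move=> Hj; apply/subsetP => v Hv; rewrite node_verts_branches.
by apply/(bigcup_nthP _ (set0, None)); exists j.
Qed.

Lemma branch_tree_verts t j :
  j < size (branches t) -> (branch t j).1 :|: otree_verts (branch t j).2 \subset tree_verts t.
Proof.
move=> Hj; rewrite tree_verts_branches; apply: setUSS; first exact: branch_node_verts.
by apply/subsetP => v Hv; apply/(bigcup_nthP _ (set0, None)); exists j.
Qed.

Lemma mpq_branch_ind (P : mpq T -> Prop) :
  (forall t, (forall j c, j < size (branches t) -> (branch t j).2 = Some c -> P c) -> P t) ->
  forall t, P t.
Proof.
move=> IH t; elim: (size (nodes t)).+1 {-2}t (ltnSn (size (nodes t))) => // n IHn t' lt.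
apply: IH => j c Hj Hc; apply: IHn; rewrite ltnS in lt; apply: leq_trans lt.
rewrite [X in _ < size X]nodes_branches /= ltnS -!count_predT.
by have := count_flatten_nth branch_nodes (set0, None) predT Hj; rewrite /branch_nodes Hc.
Qed.

Lemma nodes_child t j c s :
  j < size (branches t) -> (branch t j).2 = Some c -> List.In s (nodes c) -> List.In s (nodes t).
Proof.
move=> Hj Hc Hs; rewrite nodes_branches; right.
by apply/(In_flatten_nth _ (set0, None)); exists j; rewrite // /branch_nodes Hc.
Qed.

Lemma nodesP t s : List.In s (nodes t) ->
  s = t \/ exists j c, [/\ j < size (branches t), (branch t j).2 = Some c & List.In s (nodes c)].
Proof.
rewrite nodes_branches => -[->|/(In_flatten_nth _ (set0, None))[j Hj]]; first by left.
by rewrite /branch_nodes; case Hc: (branch t j).2 => [c|] // Hs; right; exists j, c.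
Qed.

Lemma count_child (q : pred (mpq T)) t j c :
  j < size (branches t) -> (branch t j).2 = Some c -> count q (nodes c) <= count q (nodes t).
Proof.
move=> Hj Hc; rewrite [X in _ <= count _ X]nodes_branches /=.
have := count_flatten_nth branch_nodes (set0, None) q Hj; rewrite /branch_nodes Hc; lia.
Qed.

Lemma count_sub (q : pred (mpq T)) t s :
  List.In s (nodes t) -> count q (nodes s) <= count q (nodes t).
Proof.
elim/mpq_branch_ind: t => t IH /nodesP[->//|[j [c [Hj Hc Hs]]]].
exact: leq_trans (IH j c Hj Hc Hs) (count_child q Hj Hc).
Qed.

Lemma tree_verts_sub t s : List.In s (nodes t) -> tree_verts s \subset tree_verts t.
Proof.
move=> Hs; apply/subsetP => v; rewrite /tree_verts !in_bigcup_has !has_count => Hv.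
exact: leq_trans Hv (count_sub _ Hs).
Qed.

Lemma nodes_self t : List.In t (nodes t).
Proof. by rewrite nodes_branches; left. Qed.

Lemma nodes_trans t s u : List.In s (nodes t) -> List.In u (nodes s) -> List.In u (nodes t).
Proof.
elim/mpq_branch_ind: t => t IH /nodesP[->//|[j [c [Hj Hc Hs]]]] Hu.
exact: nodes_child Hj Hc (IH j c Hj Hc Hs Hu).
Qed.

Definition unique_assignment t : Prop :=
  forall v, count (fun nd => v \in node_verts nd) (nodes t) <= 1.

Lemma unique_assignment_sub t s :
  List.In s (nodes t) -> unique_assignment t -> unique_assignment s.
Proof. by move=> Hs U v; apply: leq_trans (U v); apply: count_sub. Qed.

Lemma unique_root_branch t j v : unique_assignment t -> j < size (branches t) ->
  v \in node_verts t -> v \notin otree_verts (branch t j).2.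
Proof.
move=> U Hj Hv; have := U v; rewrite nodes_branches /= Hv add1n ltnS leqn0 => /eqP H0.
have := count_flatten_nth branch_nodes (set0, None) (fun nd => v \in node_verts nd) Hj.
by rewrite H0 leqn0 otree_verts_has has_count => /eqP->.
Qed.

Lemma unique_branches t i j v : unique_assignment t ->
  i < size (branches t) -> j < size (branches t) ->
  v \in otree_verts (branch t i).2 -> v \in otree_verts (branch t j).2 -> i = j.
Proof.
move=> U Hi Hj; rewrite !otree_verts_has; apply: count_flatten_le1 Hi Hj.
by have := U v; rewrite nodes_branches /=; lia.
Qed.

Lemma path_cliquesP t K : reflect
  (exists2 j, j < size (branches t) & K \in branch_cliques (branch t j)) (K \in path_cliques t).
Proof. by rewrite path_cliques_branches; apply: mem_flatten_nth. Qed.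

Lemma branch_cliquesP p K : K \in branch_cliques p ->
  (p.2 = None /\ K = p.1) \/
  exists c K', [/\ p.2 = Some c, K' \in path_cliques c & K = p.1 :|: K'].
Proof.
rewrite /branch_cliques; case: p.2 => [c /mapP[K' HK' ->]|]; last by rewrite inE => /eqP->; left.
by right; exists c, K'.
Qed.

Lemma path_clique_branch t j c K : j < size (branches t) -> (branch t j).2 = Some c ->
  K \in path_cliques c -> (branch t j).1 :|: K \in path_cliques t.
Proof. by move=> Hj Hc HK; apply/path_cliquesP; exists j; rewrite // /branch_cliques Hc map_f. Qed.

Lemma path_clique_leaf t j : j < size (branches t) -> (branch t j).2 = None ->
  (branch t j).1 \in path_cliques t.
Proof. by move=> Hj Hc; apply/path_cliquesP; exists j; rewrite // /branch_cliques Hc inE. Qed.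

Lemma path_clique_sub t K : K \in path_cliques t -> K \subset tree_verts t.
Proof.
elim/mpq_branch_ind: t K => t IH K /path_cliquesP[j Hj /branch_cliquesP HK].
apply: subset_trans (branch_tree_verts Hj).
case: HK => [[_ ->]|[c [K' [Hc HK' ->]]]]; first exact: subsetUl.
by apply: setUS; rewrite Hc; exact: IH j c Hj Hc K' HK'.
Qed.

Lemma path_clique_lift t s K : List.In s (nodes t) -> K \in path_cliques s ->
  exists2 K', K' \in path_cliques t & K \subset K'.
Proof.
elim/mpq_branch_ind: t => t IH /nodesP[-> HK|[j [c [Hj Hc Hs]]] HK]; first by exists K.
have [K' HK' sKK'] := IH j c Hj Hc Hs HK.
exists ((branch t j).1 :|: K'); first exact: path_clique_branch Hc HK'.
by apply/subsetU; rewrite sKK' orbT.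
Qed.

(* No node of the tree has an empty list of branches (Q-nodes have k >= 3). *)
Definition no_empty_node t : Prop := forall s, List.In s (nodes t) -> branches s <> [::].

Lemma branch_path_clique_of t j v : j < size (branches t) ->
  (forall c, (branch t j).2 = Some c ->
     exists2 K, K \in path_cliques c & (v \in tree_verts c -> v \in K)) ->
  exists2 K, K \in path_cliques t &
    (branch t j).1 \subset K /\ (v \in otree_verts (branch t j).2 -> v \in K).
Proof.
move=> Hj Hchild; case Hc: (branch t j).2 => [c|].
  have [K HK HvK] := Hchild c Hc.
  exists ((branch t j).1 :|: K); first exact: path_clique_branch Hc HK.
  by rewrite subsetUl; split=> // /HvK Hv; rewrite in_setU Hv orbT.
exists (branch t j).1; first exact: path_clique_leaf.
by split; rewrite ?subxx //= in_set0.
Qed.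

Lemma path_clique_cover t v : no_empty_node t ->
  exists2 K, K \in path_cliques t & (v \in tree_verts t -> v \in K).
Proof.
elim/mpq_branch_ind: t => t IH Hne.
have [j Hj Hv] : exists2 j, j < size (branches t) &
    (v \in tree_verts t -> v \in (branch t j).1 :|: otree_verts (branch t j).2).
  case: (boolP (v \in tree_verts t)) => [|_]; last first.
    by exists 0 => //; case: (branches t) (Hne t (nodes_self t)).
  rewrite tree_verts_branches node_verts_branches in_setU.
  by case/orP => /(bigcup_nthP _ (set0, None)) [j Hj Hv]; exists j; rewrite // in_setU Hv ?orbT.
have [|K HK [sK HvK]] := branch_path_clique_of (v := v) Hj.
  by move=> c Hc; apply: (IH j c Hj Hc) => s Hs; apply: Hne; exact: nodes_child Hj Hc Hs.
exists K => // /Hv; rewrite in_setU => /orP[/(subsetP sK)//|]; exact: HvK.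
Qed.

Lemma branch_path_clique t j v : no_empty_node t -> j < size (branches t) ->
  exists2 K, K \in path_cliques t &
    (branch t j).1 \subset K /\ (v \in otree_verts (branch t j).2 -> v \in K).
Proof.
move=> Hne Hj; apply: (branch_path_clique_of (v := v) Hj) => c Hc.
by apply: path_clique_cover => s Hs; apply: Hne; exact: nodes_child Hj Hc Hs.
Qed.

Lemma path_clique_local t s K : unique_assignment t -> List.In s (nodes t) ->
  0 < size (branches s) -> K \in path_cliques t ->
  exists2 j, j < size (branches s) &
    K :&: tree_verts s \subset (branch s j).1 :|: otree_verts (branch s j).2.
Proof.
elim/mpq_branch_ind: t K => t IH K U /nodesP[->|[i [c [Hi Hc Hs]]]] Hsize.
  case/path_cliquesP=> j Hj /branch_cliquesP HK; exists j => //.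
  apply: subset_trans (subsetIl _ _) _.
  case: HK => [[_ ->]|[c [K' [Hc HK' ->]]]]; first exact: subsetUl.
  by apply: setUS; rewrite Hc; exact: path_clique_sub HK'.
have in_c v : v \in tree_verts s -> v \in otree_verts (branch t i).2.
  by rewrite Hc => /(subsetP (tree_verts_sub Hs)).
have off_root v : v \in tree_verts s -> v \notin node_verts t.
  by move=> /in_c Hv; apply: contraL Hv; exact: unique_root_branch.
case/path_cliquesP=> j Hj /branch_cliquesP HK.
have off_R v : v \in tree_verts s -> v \notin (branch t j).1.
  by move/off_root; apply: contra; exact: (subsetP (branch_node_verts Hj)).
case: HK => [[_ EK]|[c' [K' [Hc' HK' EK]]]].
  by exists 0 => //; apply/subsetP => v; rewrite EK inE => /andP[Hv /off_R]; rewrite Hv.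
have in_K' v : v \in K :&: tree_verts s -> v \in K'.
  by case/setIP; rewrite EK in_setU => /orP[Hv /off_R|//]; rewrite Hv.
case: (eqVneq i j) => [Eij|nij].
  subst j; move: Hc'; rewrite Hc => -[Ec]; subst c'.
  have Uc := unique_assignment_sub (nodes_child Hi Hc (nodes_self c)) U.
  have [j' Hj' sK'] := IH i c Hi Hc K' Uc Hs Hsize HK'; exists j' => //.
  by apply: subset_trans sK'; apply/subsetP => v Hv; rewrite inE in_K' //; case/setIP: Hv.
exists 0 => //; apply/subsetP => v Hv; case/negP: nij; apply/eqP.
apply: (unique_branches U Hi Hj (in_c v _)); first by case/setIP: Hv.
by rewrite Hc'; exact: (subsetP (path_clique_sub HK')) (in_K' v Hv).
Qed.

End TreeStructure.

Section IntervalGraphs.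
Variable T : finType.
Implicit Types (h g : rel T) (K : {set T}).

Lemma uniq4P (a x b y : T) :
  uniq [:: a; x; b; y] -> [/\ a != x, a != b, a != y & [/\ x != b, x != y & b != y]].
Proof. by rewrite /= !inE !negb_or => /and4P[/and3P[-> -> ->] /andP[-> ->] -> _]. Qed.

(* Interval graphs contain no induced 4-cycle a - x - b - y - a: the intervals
   of the two non-adjacent pairs would have to be separated in both orders. *)
Lemma interval_graph_C4_free h a x b y : interval_graph h ->
  h a x -> h x b -> h b y -> h y a -> ~~ h a b -> ~~ h x y -> uniq [:: a; x; b; y] -> False.
Proof.
case=> l [r [lr Hint]] hax hxb hby hya nab nxy.
have E u v : u != v -> h u v = ((l u <= r v) && (l v <= r u))%R.
  move=> uv; apply/idP/idP => [/(Hint u v uv)|/andP[h1 h2]].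
    by rewrite ge_max !le_min => /andP[/andP[_ ->] /andP[-> _]].
  by apply/(Hint u v uv); rewrite ge_max !le_min lr h1 h2 lr.
move=> /uniq4P[ax ab ay [xb xy by_]]; have ya : y != a by rewrite eq_sym.
move: hax hxb hby hya nab nxy.
rewrite (E _ _ ab) (E _ _ xy) (E _ _ ax) (E _ _ xb) (E _ _ by_) (E _ _ ya).
move=> /andP[h1 h2] /andP[h3 h4] /andP[h5 h6] /andP[h7 h8].
by rewrite !negb_and -!ltNge => /orP[] hab /orP[] hxy; lra.
Qed.

(* Hence an edge xy whose endpoints have two non-adjacent common neighbours a, b
   is not an interval edge: deleting it leaves the induced cycle a - x - b - y. *)
Lemma C4_not_interval_edge g a x b y :
  g a x -> g x b -> g b y -> g y a -> ~~ g a b -> uniq [:: a; x; b; y] ->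
  ~ interval_graph (del_edge g x y).
Proof.
move=> gax gxb gby gya nab U Hint; have [ax ab ay [xb xy by_]] := uniq4P U.
apply: (interval_graph_C4_free Hint _ _ _ _ _ _ U); rewrite /del_edge ?eqxx ?andbT ?andbF //=;
  by rewrite ?(eq_sym b x) ?(eq_sym y x) ?(negbTE nab) ?(negbTE ax) ?(negbTE ay) ?(negbTE xb)
             ?(negbTE xy) ?(negbTE by_) ?andbF ?andbT.
Qed.

(* Boolean version of is_clique, to use maximal sets and boolean negation. *)
Definition cliqueb g K : bool :=
  [forall u, forall v, (u \in K) ==> (v \in K) ==> (u != v) ==> g u v].

Lemma cliqueP g K : reflect (is_clique g K) (cliqueb g K).
Proof.
apply: (iffP forallP) => [H u v Hu Hv uv|H u]; first by move: (forallP (H u) v); rewrite Hu Hv uv.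
by apply/forallP => v; apply/implyP => Hu; apply/implyP => Hv; apply/implyP; exact: H.
Qed.

Lemma not_cliqueP g K : ~ is_clique g K -> exists u w, [/\ u \in K, w \in K, u != w & ~~ g u w].
Proof.
move/cliqueP/forallPn => [u /forallPn [w]]; rewrite !negb_imply => /and4P[Hu Hw uw nuw].
by exists u, w.
Qed.

Lemma max_clique_exists g K : is_clique g K -> exists2 M : {set T}, K \subset M & max_clique g M.
Proof.
move/cliqueP=> HK; have [M /maxsetP[/cliqueP HM Hmax] sKM] := @maxset_exists T (cliqueb g) K HK.
exists M => //.
by split=> // K' sMK' /cliqueP HK'; exact: Hmax.
Qed.

End IntervalGraphs.

Section QNodeEdge.
Variables (T : finType) (g : rel T) (t : mpq T) (ss : seq ({set T} * option (mpq T))).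
Hypotheses (g_sym : symmetric g) (tree_t : MPQ_tree g t) (Q_in_t : List.In (QNode ss) (nodes t)).
Implicit Types (v : T) (K : {set T}).

Local Notation Q := (QNode ss).

Let Q_ok : Qnode_ok ss.
Proof. by have [_ _ _ Qnodes_ok _] := tree_t; apply: Qnodes_ok. Qed.

Let ss_nonempty : 0 < size ss.
Proof. by case: Q_ok => k3 _; apply: leq_trans k3. Qed.

Let unique_t : unique_assignment t.
Proof. by have [assigned_once _ _ _ _] := tree_t => v; rewrite assigned_once. Qed.

Let unique_Q : unique_assignment Q.
Proof. exact: unique_assignment_sub Q_in_t unique_t. Qed.

Let no_empty_Q : no_empty_node Q.
Proof.
have [_ _ _ Qnodes_ok _] := tree_t.
move=> s /(nodes_trans Q_in_t); case: s => [Sv [|c cs]|ss'] // /Qnodes_ok [k3 _] Ess'.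
by move: k3; rewrite /= in Ess'; rewrite Ess'.
Qed.

Lemma sec_node j v : j < size ss -> v \in sec ss j -> v \in node_verts Q.
Proof. by move=> Hj; apply/subsetP; exact: (branch_node_verts (t := Q) Hj). Qed.

Lemma sec_sub_tree j : j < size ss -> sec ss j :|: sub ss j \subset tree_verts Q.
Proof. exact: (branch_tree_verts (t := Q)). Qed.

Lemma sec_contiguous v i m k : v \in node_verts Q -> i <= m <= k -> k < size ss ->
  v \in sec ss i -> v \in sec ss k -> v \in sec ss m.
Proof.
case: Q_ok => _ [interval _] /interval [l [r [_ Hv]]] /andP[im mk] Hk.
have Hm := leq_ltn_trans mk Hk; have Hi := leq_ltn_trans im Hm.
rewrite (Hv i Hi) (Hv k Hk) (Hv m Hm) => /andP[li _] /andP[_ kr].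
by rewrite (leq_trans li im) (leq_trans mk kr).
Qed.

(* A vertex lying in two positions (section or subtree) either lies in both
   sections, or the positions coincide: subtrees are pairwise disjoint and
   disjoint from the vertices of Q. *)
Lemma branch_meet v i j : i < size ss -> j < size ss ->
  v \in sec ss i :|: sub ss i -> v \in sec ss j :|: sub ss j ->
  (v \in sec ss i) && (v \in sec ss j) \/ i = j.
Proof.
move=> Hi Hj; case: (boolP (v \in node_verts Q)) => HvQ.
  have out_sub k : k < size ss -> v \notin sub ss k := fun Hk => unique_root_branch unique_Q Hk HvQ.
  by rewrite !in_setU (negbTE (out_sub i Hi)) (negbTE (out_sub j Hj)) !orbF => -> ->; left.
have out_sec k : k < size ss -> v \notin sec ss k by move=> Hk; apply: contra HvQ; exact: sec_node.
rewrite !in_setU (negbTE (out_sec i Hi)) (negbTE (out_sec j Hj)) /= => Hvi Hvj.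
by right; exact: unique_branches unique_Q Hi Hj Hvi Hvj.
Qed.

Lemma path_clique_clique K : K \in path_cliques t -> is_clique g K.
Proof. by have [_ [_ Hpc] _ _ _] := tree_t => /Hpc []. Qed.

(* Two vertices sharing the section S_j (or one in S_j, one in V_j) are adjacent:
   some descending path passes through both. *)
Lemma section_adjacent j u v : j < size ss ->
  u \in sec ss j -> v \in sec ss j :|: sub ss j -> u != v -> g u v.
Proof.
move=> Hj Hu Hv uv; have [K HK [sK HvK]] := branch_path_clique v no_empty_Q Hj.
have [K' HK' sKK'] := path_clique_lift Q_in_t HK.
apply: (path_clique_clique HK') uv; apply: (subsetP sKK'); first exact: (subsetP sK).
by case/setUP: Hv => [/(subsetP sK)|/HvK].
Qed.

(* Adjacent vertices below Q lie in a common position of Q: the maximal clique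
   containing them is a descending path, which enters only one position. *)
Lemma adjacent_common_branch a b : g a b -> a \in tree_verts Q -> b \in tree_verts Q ->
  exists2 j, j < size ss & (a \in sec ss j :|: sub ss j) && (b \in sec ss j :|: sub ss j).
Proof.
move=> gab Ha Hb.
have ab_clique : is_clique g [set a; b].
  by move=> u w; rewrite !inE => /orP[]/eqP-> /orP[]/eqP->; rewrite ?eqxx // g_sym.
have [M sM maxM] := max_clique_exists ab_clique.
have [_ [_ Hpc] _ _ _] := tree_t.
have [|j Hj sMj] := path_clique_local unique_t Q_in_t _ ((Hpc M).2 maxM); first exact: ss_nonempty.
exists j => //; apply/andP; split; apply: (subsetP sMj); rewrite inE ?Ha ?Hb andbT;
  by apply: (subsetP sM); rewrite !inE eqxx ?orbT.
Qed.

Lemma outer_not_adjacent i a b : i.+1 < size ss ->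
  a \in sec ss i :|: sub ss i -> a \notin sec ss i.+1 ->
  b \in sec ss i.+1 :|: sub ss i.+1 -> b \notin sec ss i -> ~~ g a b.
Proof.
move=> Hi1 Ha na Hb nb; have Hi := ltnW Hi1; apply/negP => gab.
have [j Hj /andP[Haj Hbj]] :=
  adjacent_common_branch gab (subsetP (sec_sub_tree Hi) a Ha) (subsetP (sec_sub_tree Hi1) b Hb).
case: (branch_meet Hi Hj Ha Haj) => [/andP[ai aj]|Eij];
  case: (branch_meet Hi1 Hj Hb Hbj) => [/andP[bi1 bj]|Ei1j].
- have aQ := sec_node Hi ai; have bQ := sec_node Hi1 bi1.
  case: (leqP j i) => ji.
    by case/negP: nb; apply: sec_contiguous bQ _ Hi1 bj bi1; rewrite ji leqnSn.
  by case/negP: na; apply: sec_contiguous aQ _ Hj ai aj; rewrite leqnSn ji.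
- by move: na; rewrite Ei1j aj.
- by move: nb; rewrite Eij bj.
- lia.
Qed.

(* Case (1): x and y share two sections, hence S_i and S_{i+1}; by (f) there are
   a in (S_i \/ V_i) \ S_{i+1} and b in (S_{i+1} \/ V_{i+1}) \ S_i, and
   a - x - b - y is an induced 4-cycle of G - xy. *)
Lemma two_common_sections x y : x \in node_verts Q -> y \in node_verts Q -> x != y ->
  1 < count (fun p : {set T} * option (mpq T) => (x \in p.1) && (y \in p.1)) ss ->
  ~ interval_graph (del_edge g x y).
Proof.
move=> Hx Hy xy /(count_gt1_nth (set0, None)) [i [j [ij Hj /andP[xi yi] /andP[xj yj]]]].
have Hi1 : i.+1 < size ss := leq_ltn_trans ij Hj; have Hi := ltnW Hi1.
have xi1 : x \in sec ss i.+1 by apply: sec_contiguous Hx _ Hj xi xj; rewrite leqnSn ij.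
have yi1 : y \in sec ss i.+1 by apply: sec_contiguous Hy _ Hj yi yj; rewrite leqnSn ij.
have [_ [_ [_ [_ [_ [_ cond_f]]]]]] := Q_ok.
have [/set0Pn[a /setDP[Ha na]] /set0Pn[b /setDP[Hb nb]]] := cond_f i.+1 Hi1.
have ab : a != b.
  apply/eqP=> Eab; subst b.
  by case: (branch_meet Hi Hi1 Ha Hb) => [/andP[_ ai1]|]; [move: na; rewrite ai1 | lia].
have ax : a != x by apply: contraNneq na => ->.
have ay : a != y by apply: contraNneq na => ->.
have xb : x != b by apply: contraNneq nb => <-.
have yb : y != b by apply: contraNneq nb => <-.
apply: (C4_not_interval_edge (a := a) (b := b)).
- by rewrite g_sym; apply: section_adjacent Hi xi Ha _; rewrite eq_sym.
- exact: section_adjacent Hi1 xi1 Hb xb.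
- by rewrite g_sym; apply: section_adjacent Hi1 yi1 Hb yb.
- by apply: section_adjacent Hi yi Ha _; rewrite eq_sym.
- exact: outer_not_adjacent Hi1 Ha na Hb nb.
- by rewrite /= !inE !negb_or ax ab ay xb xy eq_sym yb.
Qed.

(* Case (2): x, y in S_i and two non-adjacent u, w in V_i; then u - x - w - y is
   an induced 4-cycle of G - xy. *)
Lemma nonclique_section i x y : i < size ss -> x \in sec ss i -> y \in sec ss i -> x != y ->
  ~ is_clique g (sub ss i) -> ~ interval_graph (del_edge g x y).
Proof.
move=> Hi xi yi xy /not_cliqueP [u [w [Hu Hw uw nuw]]].
have not_sub v : v \in sec ss i -> v \notin sub ss i.
  by move=> Hv; exact: (unique_root_branch unique_Q Hi (sec_node Hi Hv)).
have xu : x != u by apply: contraTneq Hu => <-; exact: not_sub.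
have xw : x != w by apply: contraTneq Hw => <-; exact: not_sub.
have yu : y != u by apply: contraTneq Hu => <-; exact: not_sub.
have yw : y != w by apply: contraTneq Hw => <-; exact: not_sub.
have Hu' : u \in sec ss i :|: sub ss i by rewrite in_setU Hu orbT.
have Hw' : w \in sec ss i :|: sub ss i by rewrite in_setU Hw orbT.
apply: (C4_not_interval_edge (a := u) (b := w)) nuw _.
- by rewrite g_sym; exact: section_adjacent Hi xi Hu' xu.
- exact: section_adjacent Hi xi Hw' xw.
- by rewrite g_sym; exact: section_adjacent Hi yi Hw' yw.
- exact: section_adjacent Hi yi Hu' yu.
- by rewrite /= !inE !negb_or eq_sym xu uw eq_sym yu xw xy eq_sym yw.
Qed.

End QNodeEdge.

Unset Implicit Arguments.
Set Strict Implicit.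

Theorem mainTheorem4 (T : finType) (g : rel T) (t : mpq T)
    (ss : seq ({set T} * option (mpq T))) (x y : T) :
  symmetric g -> irreflexive g -> interval_graph g -> MPQ_tree g t ->
  List.In (QNode ss) (nodes t) ->
  x \in node_verts (QNode ss) -> y \in node_verts (QNode ss) ->
  g x y ->
  (1 < count (fun p : {set T} * option (mpq T) => (x \in p.1) && (y \in p.1)) ss \/
   exists2 i, i < size ss &
     [/\ x \in sec ss i, y \in sec ss i & ~ is_clique g (sub ss i)]) ->
  ~ interval_edge g x y.
Proof.
move=> g_sym g_irr _ tree_t Q_in_t Hx Hy gxy cases [_ del_interval].
have xy : x != y by apply: contraTneq gxy => ->; rewrite g_irr.
case: cases => [common|[i Hi [xi yi not_clique]]].
  exact: (two_common_sections g_sym tree_t Q_in_t Hx Hy xy common del_interval).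
exact: (nonclique_section g_sym tree_t Q_in_t Hi xi yi xy not_clique del_interval).
Qed.
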